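(* Let $(Y,\rho)$ be a metric space, $\hookrightarrow_*$ a monotone embedding relation on the subsets of $Y$, $X$ a paracompact space, and $\varphi:X\rightrightarrows Y$ a $\rho$-continuous mapping such that each $\varphi(x)$, $x\in X$, is uniformly $UV^*$. Suppose $\mathscr{U}_1$ is a locally finite open cover of $X$ and $\delta_1:\mathscr{U}_1\to(0,+\infty)$. Then there exist a locally finite open cover $\mathscr{U}_2$ of $X$ refining $\mathscr{U}_1$ and functions $\delta_2,\varepsilon_2:\mathscr{U}_2\to(0,+\infty)$ with $\delta_2\le\varepsilon_2$ such that: (i) $\mathbf{O}_{\delta_2(U)}(\varphi(p))\hookrightarrow_*\mathbf{O}_{\varepsilon_2(U)}(\varphi(p))$ for every $U\in\mathscr{U}_2$ and $p\in U$; (ii) $H(\rho)(\varphi(p),\varphi(q))<\delta_2(U)/2$ for every $U\in\mathscr{U}_2$ and $p,q\in U$; (iii) $\varepsilon_2(U_2)\le\delta_1(U_1)/3$ whenever $U_1\in\mathscr{U}_1$, $U_2\in\mathscr{U}_2$ and $U_1\cap U_2\ne\emptyset$.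
   Context: A set-valued mapping $\varphi:X\rightrightarrows Y$ assigns to each $x\in X$ a nonempty subset $\varphi(x)\subset Y$. For a metric space $(Y,\rho)$, $\mathbf{O}_\varepsilon(y)$ is the open $\varepsilon$-ball about $y$ and $\mathbf{O}_\varepsilon(S)=\bigcup_{q\in S}\mathbf{O}_\varepsilon(q)$. The Hausdorff distance of nonempty $S,T\subset Y$ is $H(\rho)(S,T)=\inf\{\varepsilon>0: S\subset\mathbf{O}_\varepsilon(T),\ T\subset\mathbf{O}_\varepsilon(S)\}$. A mapping $\varphi$ is $\rho$-continuous if for every $\varepsilon>0$ each $x\in X$ has a neighbourhood $V$ with $\varphi(x)\subset\mathbf{O}_\varepsilon(\varphi(p))$ and $\varphi(p)\subset\mathbf{O}_\varepsilon(\varphi(x))$ for all $p\in V$. An embedding relation $\hookrightarrow_*$ on subsets of $Y$ is a relation with $S\hookrightarrow_*T$ implying $S\subset T$; it is monotone if $A\subset S\hookrightarrow_* T\subset B$ implies $A\hookrightarrow_* B$. A subset $S\subset Y$ is uniformly $UV^*$ if for every $\varepsilon>0$ there is $\delta>0$ with $\mathbf{O}_\delta(S)\hookrightarrow_*\mathbf{O}_\varepsilon(S)$. *)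

From Stdlib Require Import Reals List.
Open Scope R_scope.

Definition is_topology {X : Type} (open : (X -> Prop) -> Prop) : Prop :=
  open (fun _ => True) /\
  (forall U V, open U -> open V -> open (fun x => U x /\ V x)) /\
  (forall F : (X -> Prop) -> Prop, (forall U, F U -> open U) ->
       open (fun x => exists U, F U /\ U x)).

Definition hausdorff {X : Type} (open : (X -> Prop) -> Prop) : Prop :=
  forall x y : X, x <> y -> exists U V, open U /\ open V /\ U x /\ V y /\
     (forall z, ~ (U z /\ V z)).

Definition open_cover {X : Type} (open : (X -> Prop) -> Prop)
  (C : (X -> Prop) -> Prop) : Prop :=
  (forall U, C U -> open U) /\ (forall x, exists U, C U /\ U x).

Definition locally_finite {X : Type} (open : (X -> Prop) -> Prop)
  (C : (X -> Prop) -> Prop) : Prop :=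
  forall x, exists V, open V /\ V x /\
    exists l : list (X -> Prop),
      forall U, C U -> (exists y, V y /\ U y) -> In U l.

Definition refines {X : Type} (C2 C1 : (X -> Prop) -> Prop) : Prop :=
  forall U2, C2 U2 -> exists U1, C1 U1 /\ (forall x, U2 x -> U1 x).

(* Paracompact (Hausdorff, as is standard): every open cover has a locally
   finite open refinement. *)
Definition paracompact {X : Type} (open : (X -> Prop) -> Prop) : Prop :=
  hausdorff open /\
  forall C, open_cover open C ->
    exists C', open_cover open C' /\ locally_finite open C' /\ refines C' C.

Definition is_metric {Y : Type} (rho : Y -> Y -> R) : Prop :=
  (forall y z, 0 <= rho y z) /\
  (forall y z, rho y z = 0 <-> y = z) /\
  (forall y z, rho y z = rho z y) /\
  (forall y z w, rho y w <= rho y z + rho z w).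

Definition ball {Y : Type} (rho : Y -> Y -> R) (eps : R) (y : Y) : Y -> Prop :=
  fun z => rho y z < eps.
Definition Onbhd {Y : Type} (rho : Y -> Y -> R) (eps : R) (S : Y -> Prop) : Y -> Prop :=
  fun z => exists q, S q /\ ball rho eps q z.

Definition subset {Y : Type} (S T : Y -> Prop) : Prop := forall y, S y -> T y.

Definition is_inf (E : R -> Prop) (h : R) : Prop :=
  (forall e, E e -> h <= e) /\ (forall b, (forall e, E e -> b <= e) -> b <= h).

(* H(rho)(S,T) = inf{eps > 0 : S ⊂ O_eps(T), T ⊂ O_eps(S)};
   hausdorff_dist_is rho S T h  means this infimum exists and equals h
   (when the set is empty the Hausdorff distance is +oo and no h exists). *)
Definition hausdorff_dist_is {Y : Type} (rho : Y -> Y -> R) (S T : Y -> Prop) (h : R) : Prop :=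
  is_inf (fun eps => 0 < eps /\ subset S (Onbhd rho eps T) /\ subset T (Onbhd rho eps S)) h.

Definition setvalued {X Y : Type} (phi : X -> Y -> Prop) : Prop :=
  forall x, exists y, phi x y.

Definition rho_continuous {X Y : Type} (open : (X -> Prop) -> Prop)
  (rho : Y -> Y -> R) (phi : X -> Y -> Prop) : Prop :=
  forall eps, 0 < eps -> forall x, exists V, open V /\ V x /\
    forall p, V p -> subset (phi x) (Onbhd rho eps (phi p)) /\
                     subset (phi p) (Onbhd rho eps (phi x)).

Definition embedding_relation {Y : Type} (emb : (Y -> Prop) -> (Y -> Prop) -> Prop) : Prop :=
  forall S T, emb S T -> subset S T.

Definition monotone_emb {Y : Type} (emb : (Y -> Prop) -> (Y -> Prop) -> Prop) : Prop :=
  forall A S T B, subset A S -> emb S T -> subset T B -> emb A B.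

Definition uniformly_UV {Y : Type} (rho : Y -> Y -> R)
  (emb : (Y -> Prop) -> (Y -> Prop) -> Prop) (S : Y -> Prop) : Prop :=
  forall eps, 0 < eps -> exists delta, 0 < delta /\
    emb (Onbhd rho delta S) (Onbhd rho eps S).

From Stdlib Require Import Reals List.
From Stdlib Require Import Lra Classical ClassicalEpsilon.
Open Scope R_scope.

(* Around a point x, choose [e] below a third of the finitely many [delta1 V1]
   with [V1] meeting a neighbourhood of x, then [d] from the uniform UV* property
   of [phi x] for [e/2], and a neighbourhood on which [phi] moves by less than
   [d/8] in the Hausdorff sense.  Such neighbourhoods, intersected with members of
   [U1], form an open cover; a locally finite refinement inherits every property. *)

Section Neighbourhoods.

Context {Y : Type}.
Variable rho : Y -> Y -> R.
Hypothesis Hrho : is_metric rho.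

Lemma Onbhd_trans (A B C : Y -> Prop) a b :
  subset A (Onbhd rho b B) -> subset B (Onbhd rho a C) ->
  subset A (Onbhd rho (a + b) C).
Proof.
  intros HAB HBC y Ay.
  destruct (HAB y Ay) as [q [Bq Hq]]; destruct (HBC q Bq) as [r [Cr Hr]].
  exists r; split; [exact Cr|]. unfold ball in *.
  destruct Hrho as [_ [_ [_ Htri]]]. specialize (Htri r q y). lra.
Qed.

Lemma Onbhd_mono (S : Y -> Prop) a b :
  a <= b -> subset (Onbhd rho a S) (Onbhd rho b S).
Proof. intros Hab y [q [Sq Hq]]. exists q. split; [exact Sq|]. unfold ball in *. lra. Qed.

Lemma Onbhd_enlarge (S T : Y -> Prop) s a b :
  subset S (Onbhd rho s T) -> s + a <= b ->
  subset (Onbhd rho a S) (Onbhd rho b T).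
Proof.
  intros HST Hab y Hy.
  apply (Onbhd_mono T (s + a) b Hab).
  exact (Onbhd_trans _ _ _ s a (fun z Hz => Hz) HST y Hy).
Qed.

Lemma is_inf_exists_pos (E : R -> Prop) :
  (exists e, E e) -> (forall e, E e -> 0 < e) -> exists h, is_inf E h.
Proof.
  intros [e0 He0] Hpos.
  set (F := fun x => E (- x)).
  assert (Hbound : bound F).
  { exists 0. intros x Fx. specialize (Hpos _ Fx). lra. }
  assert (HF : exists x, F x).
  { exists (- e0). unfold F. rewrite Ropp_involutive. exact He0. }
  destruct (completeness F Hbound HF) as [m [Hub Hlub]].
  exists (- m). split.
  - intros e Ee.
    assert (F (- e)) as HFe by (unfold F; rewrite Ropp_involutive; exact Ee).
    specialize (Hub _ HFe). lra.
  - intros b Hb. assert (m <= - b) by (apply Hlub; intros x Fx; specialize (Hb _ Fx); lra).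
    lra.
Qed.

Lemma hausdorff_dist_le (S T : Y -> Prop) e :
  0 < e -> subset S (Onbhd rho e T) -> subset T (Onbhd rho e S) ->
  exists h, hausdorff_dist_is rho S T h /\ h <= e.
Proof.
  intros He HST HTS.
  destruct (is_inf_exists_pos
              (fun eps => 0 < eps /\ subset S (Onbhd rho eps T) /\ subset T (Onbhd rho eps S)))
    as [h Hh].
  - exists e. auto.
  - intros eps [Heps _]. exact Heps.
  - exists h. split; [exact Hh|]. apply (proj1 Hh). auto.
Qed.

End Neighbourhoods.

Lemma list_min_pos {A : Type} (P : A -> Prop) (f : A -> R) (l : list A) :
  (forall a, P a -> 0 < f a) ->
  exists m, 0 < m /\ forall a, In a l -> P a -> m <= f a.
Proof.
  intros Hpos. induction l as [|a l [m [Hm Hl]]].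
  - exists 1. split; [lra|]. intros a [].
  - destruct (classic (P a)) as [Pa|nPa].
    + exists (Rmin m (f a)). split; [apply Rmin_glb_lt; auto|].
      intros b [<-|Hb] Pb; [apply Rmin_r|].
      eapply Rle_trans; [apply Rmin_l|]. auto.
    + exists m. split; [exact Hm|]. intros b [<-|Hb] Pb; [contradiction|auto].
Qed.

Lemma locally_finite_lower_bound {X : Type} (open : (X -> Prop) -> Prop)
  (C : (X -> Prop) -> Prop) (f : (X -> Prop) -> R) :
  locally_finite open C -> (forall U, C U -> 0 < f U) ->
  forall x, exists W m, open W /\ W x /\ 0 < m /\
    forall U, C U -> (exists y, U y /\ W y) -> m <= f U.
Proof.
  intros Hlf Hpos x. destruct (Hlf x) as [W [HW [Wx [l Hl]]]].
  destruct (list_min_pos C f l Hpos) as [m [Hm Hml]].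
  exists W, m. repeat split; auto.
  intros U HU [y [Uy Wy]]. apply Hml; [apply Hl; eauto|exact HU].
Qed.

Lemma choice_on_pairs {A : Type} (C : A -> Prop) (P : A -> R -> R -> Prop) :
  (forall a, C a -> exists d e, P a d e) ->
  exists f g : A -> R, forall a, C a -> P a (f a) (g a).
Proof.
  intros Hex.
  assert (Hpair : forall a, exists de : R * R, C a -> P a (fst de) (snd de)).
  { intro a. destruct (classic (C a)) as [Ca|nCa].
    - destruct (Hex a Ca) as [d [e Hde]]. exists (d, e). auto.
    - exists (0, 0). contradiction. }
  destruct (choice _ Hpair) as [f Hf].
  exists (fun a => fst (f a)), (fun a => snd (f a)). exact Hf.
Qed.

Section Refinement.

Context {Y : Type}.
Variable rho : Y -> Y -> R.
Hypothesis Hrho : is_metric rho.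
Variable emb : (Y -> Prop) -> (Y -> Prop) -> Prop.
Hypothesis Hmono : monotone_emb emb.
Context {X : Type}.
Variable phi : X -> Y -> Prop.
Variables (U1 : (X -> Prop) -> Prop) (delta1 : (X -> Prop) -> R).

Definition admissible (U : X -> Prop) (d e : R) : Prop :=
  0 < d /\ 0 < e /\ d <= e /\
  (forall p, U p -> emb (Onbhd rho d (phi p)) (Onbhd rho e (phi p))) /\
  (forall p q, U p -> U q ->
     exists h, hausdorff_dist_is rho (phi p) (phi q) h /\ h < d / 2) /\
  (forall V1, U1 V1 -> (exists x, V1 x /\ U x) -> e <= delta1 V1 / 3).

Lemma admissible_subset (U V : X -> Prop) d e :
  (forall x, V x -> U x) -> admissible U d e -> admissible V d e.
Proof.
  intros HVU [Hd [He [Hde [Hemb [Hhd Hdelta]]]]].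
  repeat split; auto.
  intros V1 HV1 [x [V1x Vx]]. apply Hdelta; eauto.
Qed.

Lemma emb_near (x p : X) s dx d e :
  emb (Onbhd rho dx (phi x)) (Onbhd rho (e / 2) (phi x)) ->
  subset (phi x) (Onbhd rho s (phi p)) -> subset (phi p) (Onbhd rho s (phi x)) ->
  s + d <= dx -> s + e / 2 <= e ->
  emb (Onbhd rho d (phi p)) (Onbhd rho e (phi p)).
Proof.
  intros Hx Hxp Hpx Hd He.
  eapply Hmono; [| exact Hx |]; eapply Onbhd_enlarge; eauto.
Qed.

Variable open : (X -> Prop) -> Prop.
Hypothesis Htop : is_topology open.
Hypothesis Hcont : rho_continuous open rho phi.
Hypothesis HUV : forall x, uniformly_UV rho emb (phi x).
Hypothesis HU1 : open_cover open U1.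
Hypothesis HU1lf : locally_finite open U1.
Hypothesis Hdelta1 : forall U, U1 U -> 0 < delta1 U.

Lemma admissible_nbhd (x : X) :
  exists W d e, open W /\ W x /\ admissible W d e.
Proof.
  destruct (locally_finite_lower_bound open U1 delta1 HU1lf Hdelta1 x)
    as [W [m [HW [Wx [Hm Hbound]]]]].
  set (e := m / 3).
  destruct (HUV x (e / 2)) as [dx [Hdx Hembx]]; [unfold e; lra|].
  set (d := Rmin (dx / 2) e).
  assert (Hd : 0 < d) by (apply Rmin_glb_lt; unfold e; lra).
  assert (Hd1 : d <= dx / 2) by apply Rmin_l.
  assert (Hd2 : d <= e) by apply Rmin_r.
  set (s := d / 8).
  destruct (Hcont s ltac:(unfold s; lra) x) as [V [HV [Vx Hnear]]].
  exists (fun z => W z /\ V z), d, e.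
  split; [apply (proj1 (proj2 Htop)); auto|].
  split; [auto|].
  repeat split; auto; [unfold e; lra| | |].
  - intros p [_ Vp]. destruct (Hnear p Vp) as [Hxp Hpx].
    apply (emb_near x p s dx d e); auto; unfold s; lra.
  - intros p q [_ Vp] [_ Vq].
    destruct (Hnear p Vp) as [Hxp Hpx]; destruct (Hnear q Vq) as [Hxq Hqx].
    destruct (hausdorff_dist_le rho (phi p) (phi q) (s + s)) as [h [Hh Hhle]];
      [unfold s; lra | eapply Onbhd_trans; eauto | eapply Onbhd_trans; eauto |].
    exists h. split; [exact Hh|]. unfold s in Hhle. lra.
  - intros V1 HV1 [z [V1z [Wz _]]].
    specialize (Hbound V1 HV1 (ex_intro _ z (conj V1z Wz))). unfold e. lra.
Qed.

Definition admissible_cover (G : X -> Prop) : Prop :=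
  open G /\ (exists d e, admissible G d e) /\ exists V1, U1 V1 /\ forall x, G x -> V1 x.

Lemma admissible_cover_is_open_cover : open_cover open admissible_cover.
Proof.
  split; [intros G [HG _]; exact HG|]. intro x.
  destruct (admissible_nbhd x) as [W [d [e [HW [Wx Hadm]]]]].
  destruct HU1 as [_ HU1c]. destruct (HU1c x) as [V1 [HV1 V1x]].
  exists (fun z => W z /\ V1 z). split; [|auto].
  split; [apply (proj1 (proj2 Htop)); auto; apply (proj1 HU1); exact HV1|].
  split.
  - exists d, e. eapply admissible_subset; [|exact Hadm]. tauto.
  - exists V1. split; [exact HV1|]. tauto.
Qed.

End Refinement.

Theorem proposition2p4
  (Y : Type) (rho : Y -> Y -> R) (Hrho : is_metric rho)
  (emb : (Y -> Prop) -> (Y -> Prop) -> Prop)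
  (Hemb : embedding_relation emb) (Hmono : monotone_emb emb)
  (X : Type) (open : (X -> Prop) -> Prop)
  (Htop : is_topology open) (Hpc : paracompact open)
  (phi : X -> Y -> Prop) (Hphi : setvalued phi)
  (Hcont : rho_continuous open rho phi)
  (HUV : forall x, uniformly_UV rho emb (phi x))
  (U1 : (X -> Prop) -> Prop) (HU1 : open_cover open U1) (HU1lf : locally_finite open U1)
  (delta1 : (X -> Prop) -> R) (Hdelta1 : forall U, U1 U -> 0 < delta1 U) :
  exists (U2 : (X -> Prop) -> Prop) (delta2 eps2 : (X -> Prop) -> R),
    open_cover open U2 /\ locally_finite open U2 /\ refines U2 U1 /\
    (forall U, U2 U -> 0 < delta2 U /\ 0 < eps2 U /\ delta2 U <= eps2 U) /\
    (forall U p, U2 U -> U p ->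
       emb (Onbhd rho (delta2 U) (phi p)) (Onbhd rho (eps2 U) (phi p))) /\
    (forall U p q, U2 U -> U p -> U q ->
       exists h, hausdorff_dist_is rho (phi p) (phi q) h /\ h < delta2 U / 2) /\
    (forall V1 V2, U1 V1 -> U2 V2 -> (exists x, V1 x /\ V2 x) ->
       eps2 V2 <= delta1 V1 / 3).
Proof.
  set (C := admissible_cover rho emb phi U1 delta1 open).
  assert (HC : open_cover open C)
    by exact (admissible_cover_is_open_cover rho Hrho emb Hmono phi U1 delta1
                open Htop Hcont HUV HU1 HU1lf Hdelta1).
  destruct (proj2 Hpc C HC) as [U2 [HU2 [HU2lf HU2C]]].
  assert (Hadm : forall U, U2 U -> exists d e, admissible rho emb phi U1 delta1 U d e).
  { intros U HU. destruct (HU2C U HU) as [G [[_ [[d [e Hde]] _]] HUG]].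
    exists d, e. exact (admissible_subset rho emb phi U1 delta1 G U d e HUG Hde). }
  destruct (choice_on_pairs U2 _ Hadm) as [delta2 [eps2 Hde]].
  exists U2, delta2, eps2.
  split; [exact HU2|]. split; [exact HU2lf|]. split.
  { intros U HU. destruct (HU2C U HU) as [G [[_ [_ [V1 [HV1 HGV1]]]] HUG]].
    exists V1. auto. }
  repeat split; intros; try apply Hde; auto.
Qed.
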